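(* Let $n,d,k\in\mathbb{N}$ with $d\ge16k\ge32$, and set $\beta=1+\frac12\log\big(\frac{d}{16k}\big)$. Let $P^1,\dots,P^d$ be independent draws from $\mathsf{Beta}(\beta,\beta)$ and let $X\in(\{0,1\}^d)^n$ have entries $X_i^j$ independent conditioned on $P$ with $\mathbb{E}[X_i^j\mid P]=P^j$. Let $M:(\{0,1\}^d)^n\to\{0,1\}^d$ be $(1,1/(8nd))$-differentially private. Suppose that for every $j\in[d]$, conditioned on $P$ (probabilities over $X$ and the randomness of $M$): (1) if $P^j\le\frac78-\frac3{16}$ then $\Pr[M(X)^j=1]\le\frac{k}{16d}$; (2) if $P^j\ge\frac78$ then $\Pr[M(X)^j=1]\ge1-\frac1{16}$. Then $n\ge\frac1{16}\sqrt{k}\,\log\big(\frac{d}{16k}\big)$.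
   Context: A dataset $x\in(\{0,1\}^d)^n$ is an $n\times d$ matrix with rows $x_i$; two datasets are neighbors if they differ in at most one row. A randomized algorithm $M$ is $(\varepsilon,\delta)$-differentially private if for all neighboring $x,x'$ and all sets $R$ of outputs, $\Pr[M(x)\in R]\le e^\varepsilon\Pr[M(x')\in R]+\delta$. $\mathsf{Beta}(\alpha,\beta)$ has density proportional to $p^{\alpha-1}(1-p)^{\beta-1}$ on $[0,1]$. $\log$ is the natural logarithm. *)

From Stdlib Require Import Reals.
From mathcomp Require Import all_boot.
Set Implicit Arguments. Unset Strict Implicit. Unset Printing Implicit Defensive.

Open Scope R_scope.

Definition row (d : nat) := {ffun 'I_d -> bool}.
Definition dataset (n d : nat) := {ffun 'I_n -> row d}.

(* A randomized algorithm M : ({0,1}^d)^n -> {0,1}^d, represented by its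
   output distribution: M x o = Pr[M(x) = o]. *)
Definition mech (n d : nat) := dataset n d -> row d -> R.

Definition is_mech (n d : nat) (M : mech n d) : Prop :=
  forall x : dataset n d,
    (forall o, 0 <= M x o) /\ \big[Rplus/0]_(o : row d) M x o = 1.

Definition prob_out (n d : nat) (M : mech n d) (x : dataset n d)
  (S : pred (row d)) : R :=
  \big[Rplus/0]_(o : row d | S o) M x o.

Definition neighbors (n d : nat) (x x' : dataset n d) : Prop :=
  exists i : 'I_n, forall i' : 'I_n, i' <> i -> x i' = x' i'.

Definition diff_private (n d : nat) (eps delta : R) (M : mech n d) : Prop :=
  forall x x' : dataset n d, neighbors x x' ->
    forall S : pred (row d),
      prob_out M x S <= exp eps * prob_out M x' S + delta.

(* Conditional on P = p, the entries X_i^j are independent Bernoulli(p^j):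
   probability of the dataset x. *)
Definition bern_weight (n d : nat) (p : 'I_d -> R) (x : dataset n d) : R :=
  \big[Rmult/1]_(i : 'I_n) \big[Rmult/1]_(j : 'I_d)
     (if x i j then p j else 1 - p j).

(* Pr[M(X)^j = 1 | P = p], over X and the coins of M. *)
Definition cond_prob_coord (n d : nat) (M : mech n d) (p : 'I_d -> R)
  (j : 'I_d) : R :=
  \big[Rplus/0]_(x : dataset n d)
     (bern_weight p x * prob_out M x (fun o : row d => o j)).

Definition beta_param (d k : nat) : R :=
  1 + / 2 * ln (INR d / (16 * INR k)).

(* Fingerprinting with the uniform prior on p in [0,1]^d.  Write
   G_j(p) = Pr[M(X)^j = 1] and c_j(p) = E[1{M(X)^j = 1} * sum_i (X_i^j - p_j)].
   Resampling one row at a time and applying privacy to the positive part of the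
   score <M(X), X_i - p>, which is at most (Y^2/lam + lam)/2 with E[Y^2] <= |M(X)|/4,
   gives sum_j c_j <= n (e (sum_j G_j / (4 lam) + lam) / 2 + delta d) for every lam > 0.
   Conversely c_j = p_j (1 - p_j) dG_j/dp_j, so integrating by parts in p_j gives
   int c_j dp_j = int G_j (2 p_j - 1) dp_j, which the accuracy thresholds bound from
   below, while they bound int G_j dp_j from above.  Averaging over the cube and taking
   lam = sqrt d yields n >= sqrt d / 32, and sqrt d / 32 >= sqrt k ln(d/16k) / 16 because
   ln r <= 2 sqrt r. *)

From Stdlib Require Import Reals Lra.
From mathcomp Require Import all_boot.
From HB Require Import structures.
From Coquelicot Require Import Coquelicot.
Open Scope R_scope.
Set Implicit Arguments. Unset Strict Implicit. Unset Printing Implicit Defensive.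
Set Warnings "-notation-overridden -redundant-canonical-projection -ambiguous-paths".

Lemma RplusA : associative Rplus. Proof. by move=> a b c; ring. Qed.
Lemma RmultA : associative Rmult. Proof. by move=> a b c; ring. Qed.
HB.instance Definition _ := Monoid.isComLaw.Build R 0 Rplus RplusA Rplus_comm Rplus_0_l.
HB.instance Definition _ := Monoid.isComLaw.Build R 1 Rmult RmultA Rmult_comm Rmult_1_l.
HB.instance Definition _ := Monoid.isMulLaw.Build R 0 Rmult Rmult_0_l Rmult_0_r.
HB.instance Definition _ :=
  Monoid.isAddLaw.Build R Rmult Rplus Rmult_plus_distr_r Rmult_plus_distr_l.

Section BigR.
Variables (I : Type) (s : seq I) (P : pred I).

Lemma sumR_le (F G : I -> R) : (forall i, P i -> F i <= G i) ->
  \big[Rplus/0]_(i <- s | P i) F i <= \big[Rplus/0]_(i <- s | P i) G i.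
Proof. by move=> FG; apply: (big_ind2 (fun x y => x <= y)) => // *; lra. Qed.

Lemma sumR_ge0 (F : I -> R) : (forall i, P i -> 0 <= F i) ->
  0 <= \big[Rplus/0]_(i <- s | P i) F i.
Proof. by move=> F0; apply: (big_ind (fun x => 0 <= x)) => // *; lra. Qed.

Lemma prodR_ge0 (F : I -> R) : (forall i, P i -> 0 <= F i) ->
  0 <= \big[Rmult/1]_(i <- s | P i) F i.
Proof.
by move=> F0; apply: (big_ind (fun x => 0 <= x)) => //; [lra | exact: Rmult_le_pos].
Qed.

Lemma sumRMl (c : R) (F : I -> R) :
  \big[Rplus/0]_(i <- s | P i) (c * F i) = c * \big[Rplus/0]_(i <- s | P i) F i.
Proof. by rewrite big_distrr. Qed.

Lemma sumRMr (c : R) (F : I -> R) :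
  \big[Rplus/0]_(i <- s | P i) (F i * c) = \big[Rplus/0]_(i <- s | P i) F i * c.
Proof. by rewrite big_distrl. Qed.

Lemma sumRN (F : I -> R) :
  \big[Rplus/0]_(i <- s | P i) (- F i) = - \big[Rplus/0]_(i <- s | P i) F i.
Proof. by apply: (big_ind2 (fun x y => x = - y)) => [|a b c e -> ->|]; rewrite //; ring. Qed.

Lemma sumRB (F G : I -> R) :
  \big[Rplus/0]_(i <- s | P i) (F i - G i) =
  \big[Rplus/0]_(i <- s | P i) F i - \big[Rplus/0]_(i <- s | P i) G i.
Proof. by rewrite big_split sumRN. Qed.

End BigR.

Lemma sumR_const (n : nat) (c : R) : \big[Rplus/0]_(i < n) c = INR n * c.
Proof. by elim: n => [|n IH]; rewrite ?big_ord0 ?big_ord_recr ?IH ?S_INR /=; ring. Qed.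

Definition b2R (b : bool) : R := if b then 1 else 0.

Section ProductBernoulli.
Variables (n d : nat) (p : 'I_d -> R).
Hypothesis p01 : forall j, 0 <= p j <= 1.

Definition row_weight (r : row d) : R :=
  \big[Rmult/1]_(j < d) (if r j then p j else 1 - p j).

Lemma row_weight_ge0 r : 0 <= row_weight r.
Proof. by apply: prodR_ge0 => j _; case: (r j); have := p01 j; lra. Qed.

Lemma bern_weight_ge0 (x : dataset n d) : 0 <= bern_weight p x.
Proof. by apply: prodR_ge0 => i _; exact: row_weight_ge0. Qed.

Lemma sum_row_weight : \big[Rplus/0]_(r : row d) row_weight r = 1.
Proof.
rewrite /row_weight -(bigA_distr_bigA (fun j (b : bool) => if b then p j else 1 - p j)).
by rewrite big1 // => j _; rewrite big_bool /=; ring.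
Qed.

Lemma sum_bern_weight : \big[Rplus/0]_(x : dataset n d) bern_weight p x = 1.
Proof.
rewrite /bern_weight -(bigA_distr_bigA (fun (i : 'I_n) r => row_weight r)) /=.
by rewrite big1 // => i _; exact: sum_row_weight.
Qed.

Lemma row_weight_covariance (j l : 'I_d) :
  \big[Rplus/0]_(r : row d) (row_weight r * (b2R (r j) - p j) * (b2R (r l) - p l)) =
  if j == l then p j * (1 - p j) else 0.
Proof.
pose centered m0 (m : 'I_d) b := if m == m0 then b2R b - p m else 1.
pose g m b := (if b then p m else 1 - p m) * centered j m b * centered l m b.
have pick m0 (r : row d) : \big[Rmult/1]_(m < d) centered m0 m (r m) = b2R (r m0) - p m0.
  by rewrite -big_mkcond big_pred1_eq.
transitivity (\big[Rplus/0]_(r : row d) \big[Rmult/1]_(m < d) g m (r m)).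
  by apply: eq_bigr => r _; rewrite !big_split /= !pick.
rewrite -(bigA_distr_bigA g) /=.
have sum_g m : \big[Rplus/0]_(b : bool) g m b =
    if m == j then (if m == l then p m * (1 - p m) else 0) else (if m == l then 0 else 1).
  by rewrite big_bool /g /centered /b2R; case: (m == j); case: (m == l); rewrite /=; ring.
under eq_bigr do rewrite sum_g.
rewrite (bigD1 j) //= eqxx; case: (eqVneq j l) => [<-|njl]; last by rewrite Rmult_0_l.
by rewrite big1 ?Rmult_1_r // => m /negbTE ->.
Qed.

End ProductBernoulli.

Definition Eout n d (M : mech n d) (x : dataset n d) (g : row d -> R) : R :=
  \big[Rplus/0]_(o : row d) (M x o * g o).

Definition Edata n d (p : 'I_d -> R) (f : dataset n d -> R) : R :=
  \big[Rplus/0]_(x : dataset n d) (bern_weight p x * f x).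

Section Expectations.
Variables (n d : nat) (M : mech n d) (p : 'I_d -> R).
Hypotheses (M_mech : is_mech M) (p01 : forall j, 0 <= p j <= 1).

Lemma Eout_le x (g h : row d -> R) : (forall o, g o <= h o) -> Eout M x g <= Eout M x h.
Proof.
by move=> gh; apply: sumR_le => o _; apply: Rmult_le_compat_l; [case: (M_mech x) | ].
Qed.

Lemma Eout_affine x (g : row d -> R) a b :
  Eout M x (fun o => a * g o + b) = a * Eout M x g + b.
Proof.
rewrite /Eout -[b in RHS]Rmult_1_r -(proj2 (M_mech x)) !big_distrr -big_split /=.
by apply: eq_bigr => o _; ring.
Qed.

Lemma Edata_le (f g : dataset n d -> R) : (forall x, f x <= g x) -> Edata p f <= Edata p g.
Proof.
by move=> fg; apply: sumR_le => x _; apply: Rmult_le_compat_l; [exact: bern_weight_ge0 |].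
Qed.

Lemma Edata_affine (f : dataset n d -> R) a b :
  Edata p (fun x => a * f x + b) = a * Edata p f + b.
Proof.
rewrite /Edata -[b in RHS]Rmult_1_r -(sum_bern_weight n p) !big_distrr -big_split /=.
by apply: eq_bigr => x _; ring.
Qed.

Lemma prob_out_ge0 x (S : pred (row d)) : 0 <= prob_out M x S.
Proof. by apply: sumR_ge0 => o _; case: (M_mech x). Qed.

Lemma prob_out_le1 x (S : pred (row d)) : prob_out M x S <= 1.
Proof.
have [M0 M1] := M_mech x; rewrite /prob_out big_mkcond /= -M1.
by apply: sumR_le => o _; case: (S o); [lra | exact: M0].
Qed.

Lemma cond_prob_coord_ge0 j : 0 <= cond_prob_coord M p j.
Proof.
by apply: sumR_ge0 => x _; apply: Rmult_le_pos; [exact: bern_weight_ge0 | exact: prob_out_ge0].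
Qed.

Lemma cond_prob_coord_le1 j : cond_prob_coord M p j <= 1.
Proof.
rewrite -(sum_bern_weight n p); apply: sumR_le => x _.
have := bern_weight_ge0 p01 x; have := prob_out_le1 x (fun o : row d => o j); nra.
Qed.

End Expectations.

Lemma dp_Eout_le n d (M : mech n d) eps delta (x x' : dataset n d) (g : row d -> R) B :
  diff_private eps delta M -> neighbors x x' -> (forall o, 0 <= g o <= B) ->
  Eout M x g <= exp eps * Eout M x' g + delta * B.
Proof.
move=> dp xx' g0B.
have B0 : 0 <= B by have := g0B [ffun => false]; lra.
(* Privacy is used only on the event where [M x] exceeds [exp eps * M x']. *)
pose S o := if Rlt_dec (exp eps * M x' o) (M x o) then true else false.
have pointwise o : (M x o - exp eps * M x' o) * g o <=
                   if S o then (M x o - exp eps * M x' o) * B else 0.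
  rewrite /S; case: Rlt_dec => lt /=; have := g0B o; first nra.
  by have := Rnot_lt_le _ _ lt; nra.
have := sumR_le (index_enum (row d)) (fun o (_ : xpredT o) => pointwise o).
have -> : \big[Rplus/0]_(o : row d) ((M x o - exp eps * M x' o) * g o) =
          Eout M x g - exp eps * Eout M x' g.
  by rewrite /Eout -sumRMl -sumRB; apply: eq_bigr => o _; ring.
have -> : \big[Rplus/0]_(o : row d) (if S o then (M x o - exp eps * M x' o) * B else 0) =
          (prob_out M x S - exp eps * prob_out M x' S) * B.
  by rewrite -big_mkcond sumRMr sumRB sumRMl.
have := dp x x' xx' S; nra.
Qed.

Definition set_row n d (x : dataset n d) (i : 'I_n) (z : row d) : dataset n d :=
  [ffun i' => if i' == i then z else x i'].

Lemma neighbors_set_row n d (x : dataset n d) i z : neighbors x (set_row x i z).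
Proof. by exists i => i' /eqP i'i; rewrite ffunE (negbTE i'i). Qed.

Lemma bern_weight_set_row n d (p : 'I_d -> R) (x : dataset n d) i z :
  bern_weight p x * row_weight p z = bern_weight p (set_row x i z) * row_weight p (x i).
Proof.
have rows (y : dataset n d) : bern_weight p y = \big[Rmult/1]_(i' < n) row_weight p (y i').
  by [].
rewrite !rows (bigD1 i) //= [in RHS](bigD1 i) //= ffunE eqxx.
rewrite [in RHS](eq_bigr (fun i' => row_weight p (x i'))) => [|i' /negbTE i'i]; last first.
  by rewrite ffunE i'i.
by set rest := \big[Rmult/1]_(i' < n | i' != i) _; ring.
Qed.

Lemma sum_set_row n d (i : 'I_n) (F : dataset n d -> row d -> R) :
  \big[Rplus/0]_(x : dataset n d) \big[Rplus/0]_(z : row d) F (set_row x i z) (x i) =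
  \big[Rplus/0]_(x : dataset n d) \big[Rplus/0]_(z : row d) F x z.
Proof.
rewrite !pair_bigA /=.
pose swap (u : dataset n d * row d) := (set_row u.1 i u.2, u.1 i).
have swapK : involutive swap.
  move=> [x z]; rewrite /swap /= ffunE eqxx; congr (_, _).
  by apply/ffunP => i'; rewrite !ffunE; case: eqP => [->|].
by rewrite [in RHS](reindex_inj (inv_inj swapK)).
Qed.

Definition score d (p : 'I_d -> R) (o r : row d) : R :=
  \big[Rplus/0]_(j < d) (b2R (o j) * (b2R (r j) - p j)).

Definition num_ones d (o : row d) : R := \big[Rplus/0]_(j < d) b2R (o j).

Section Score.
Variables (d : nat) (p : 'I_d -> R).
Hypothesis p01 : forall j, 0 <= p j <= 1.

Lemma score_abs_le o r : Rabs (score p o r) <= INR d.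
Proof.
rewrite -[INR d]Rmult_1_r -sumR_const.
apply: (big_ind2 (fun a b => Rabs a <= b)) => [|a b c e ab ce|j _].
- by rewrite Rabs_R0; lra.
- by apply: Rle_trans (Rabs_triang _ _) _; lra.
- by have := p01 j; rewrite /b2R; case: (o j); case: (r j) => pj; apply: Rabs_le; lra.
Qed.

Lemma score_second_moment_le o :
  \big[Rplus/0]_(r : row d) (row_weight p r * (score p o r * score p o r)) <= num_ones o / 4.
Proof.
have -> : \big[Rplus/0]_(r : row d) (row_weight p r * (score p o r * score p o r)) =
    \big[Rplus/0]_(j < d) (b2R (o j) * b2R (o j) * (p j * (1 - p j))).
  transitivity (\big[Rplus/0]_(r : row d) \big[Rplus/0]_(j < d) \big[Rplus/0]_(l < d)
      (b2R (o j) * b2R (o l) * (row_weight p r * (b2R (r j) - p j) * (b2R (r l) - p l)))).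
    apply: eq_bigr => r _; rewrite /score -sumRMr -sumRMl; apply: eq_bigr => j _.
    by rewrite -sumRMl -sumRMl; apply: eq_bigr => l _; ring.
  rewrite exchange_big /=; apply: eq_bigr => j _; rewrite exchange_big /=.
  under eq_bigr do rewrite sumRMl row_weight_covariance.
  by rewrite (bigD1 j) //= eqxx big1 ?Rplus_0_r // => l; rewrite eq_sym => /negbTE ->; ring.
rewrite /num_ones /Rdiv -sumRMr; apply: sumR_le => j _.
by have := p01 j; have := Rle_0_sqr (p j - /2); rewrite /Rsqr /b2R; case: (o j); nra.
Qed.

Lemma score_pos_mean_le o lam : 0 < lam ->
  \big[Rplus/0]_(r : row d) (row_weight p r * Rmax (score p o r) 0) <=
  (num_ones o / (4 * lam) + lam) / 2.
Proof.
move=> lam0.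
have amgm y : Rmax y 0 <= / (2 * lam) * (y * y) + lam / 2.
  have : 0 <= (Rabs y - lam) * (Rabs y - lam) by apply: Rle_0_sqr.
  have : Rabs y * Rabs y = y * y by rewrite -Rabs_mult Rabs_pos_eq //; apply: Rle_0_sqr.
  have : Rmax y 0 <= Rabs y by apply: Rmax_lub; [apply: Rle_abs | apply: Rabs_pos].
  have : / (2 * lam) * (2 * lam) = 1 by field; lra.
  have : 0 < / (2 * lam) by apply: Rinv_0_lt_compat; lra.
  nra.
apply: Rle_trans (sumR_le (index_enum (row d)) (fun r (_ : xpredT r) =>
  Rmult_le_compat_l _ _ _ (row_weight_ge0 p01 r) (amgm (score p o r)))) _.
have -> : \big[Rplus/0]_(r : row d)
      (row_weight p r * (/ (2 * lam) * (score p o r * score p o r) + lam / 2)) =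
    / (2 * lam) * \big[Rplus/0]_(r : row d) (row_weight p r * (score p o r * score p o r)) +
    lam / 2 * \big[Rplus/0]_(r : row d) row_weight p r.
  by rewrite -!sumRMl -big_split /=; apply: eq_bigr => r _; ring.
rewrite sum_row_weight.
have : 0 < / (2 * lam) by apply: Rinv_0_lt_compat; lra.
have := score_second_moment_le o.
have -> : (num_ones o / (4 * lam) + lam) / 2 = / (2 * lam) * (num_ones o / 4) + lam / 2.
  by field; lra.
nra.
Qed.

End Score.

Definition fp_corr n d (M : mech n d) (p : 'I_d -> R) (j : 'I_d) : R :=
  Edata p (fun x => prob_out M x (fun o : row d => o j) *
                    \big[Rplus/0]_(i < n) (b2R (x i j) - p j)).

Section FingerprintUpperBound.
Variables (n d : nat) (M : mech n d) (p : 'I_d -> R) (eps delta : R).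
Hypotheses (M_mech : is_mech M) (p01 : forall j, 0 <= p j <= 1).
Hypothesis M_dp : diff_private eps delta M.

(* Swapping row [i] with a fresh row [z] preserves the product measure; after the
   swap the score is computed against a row that [M] never saw. *)
Lemma resampled_score_le i :
  Edata p (fun x => Eout M x (fun o => score p o (x i))) <=
  exp eps * Edata p (fun x => \big[Rplus/0]_(z : row d)
                       (row_weight p z * Eout M x (fun o => Rmax (score p o z) 0)))
  + delta * INR d.
Proof.
pose F x z := bern_weight p x * row_weight p z * Eout M x (fun o => Rmax (score p o z) 0).
have dp_step x z : Eout M x (fun o => score p o (x i)) <=
    exp eps * Eout M (set_row x i z) (fun o => Rmax (score p o (x i)) 0) + delta * INR d.
  apply: Rle_trans (Eout_le M_mech _ (fun o => Rmax_l _ 0)) _.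
  apply: dp_Eout_le (neighbors_set_row x i z) _ => // o; split; first exact: Rmax_r.
  by apply: Rmax_lub; [apply: Rle_trans (Rle_abs _) (score_abs_le p01 _ _) | apply: pos_INR].
have averaged : Edata p (fun x => Eout M x (fun o => score p o (x i))) <=
    \big[Rplus/0]_(x : dataset n d) \big[Rplus/0]_(z : row d)
      (F (set_row x i z) (x i) * exp eps + bern_weight p x * row_weight p z * (delta * INR d)).
  apply: sumR_le => x _.
  have -> : bern_weight p x * Eout M x (fun o => score p o (x i)) = \big[Rplus/0]_(z : row d)
      (bern_weight p x * row_weight p z * Eout M x (fun o => score p o (x i))).
    by rewrite sumRMr sumRMl sum_row_weight; ring.
  apply: sumR_le => z _; rewrite /F -bern_weight_set_row.
  have w0 := Rmult_le_pos _ _ (bern_weight_ge0 p01 x) (row_weight_ge0 p01 z).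
  have := Rmult_le_compat_l _ _ _ w0 (dp_step x z).
  by move/Rle_trans; apply; apply: Req_le; ring.
apply: Rle_trans averaged _; apply: Req_le.
under eq_bigr do rewrite big_split /= sumRMr.
rewrite big_split /= sumRMr sum_set_row.
have -> : \big[Rplus/0]_(x : dataset n d) \big[Rplus/0]_(z : row d)
    (bern_weight p x * row_weight p z * (delta * INR d)) = delta * INR d.
  under eq_bigr do rewrite sumRMr sumRMl sum_row_weight Rmult_1_r.
  by rewrite sumRMr sum_bern_weight; ring.
have -> : \big[Rplus/0]_(x : dataset n d) \big[Rplus/0]_(z : row d) F x z =
    Edata p (fun x => \big[Rplus/0]_(z : row d)
                       (row_weight p z * Eout M x (fun o => Rmax (score p o z) 0))).
  by apply: eq_bigr => x _; rewrite -sumRMl; apply: eq_bigr => z _; rewrite /F; ring.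
by rewrite Rmult_comm.
Qed.

Lemma score_correlation_le i lam : 0 < lam ->
  Edata p (fun x => Eout M x (fun o => score p o (x i))) <=
  exp eps * (Edata p (fun x => Eout M x (@num_ones d)) / (4 * lam) + lam) / 2 + delta * INR d.
Proof.
move=> lam0; apply: Rle_trans (resampled_score_le i) _.
have -> : exp eps * (Edata p (fun x => Eout M x (@num_ones d)) / (4 * lam) + lam) / 2 =
    exp eps * Edata p (fun x => Eout M x (fun o => / (8 * lam) * num_ones o + lam / 2)).
  have -> : Edata p (fun x => Eout M x (fun o => / (8 * lam) * num_ones o + lam / 2)) =
      / (8 * lam) * Edata p (fun x => Eout M x (@num_ones d)) + lam / 2.
    by rewrite -Edata_affine; apply: eq_bigr => x _; rewrite Eout_affine.
  by field; lra.
apply: Rplus_le_compat_r; apply: Rmult_le_compat_l; first exact: Rlt_le (exp_pos _).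
apply: Edata_le => // x.
have -> : \big[Rplus/0]_(z : row d) (row_weight p z * Eout M x (fun o => Rmax (score p o z) 0)) =
    Eout M x (fun o => \big[Rplus/0]_(z : row d) (row_weight p z * Rmax (score p o z) 0)).
  rewrite /Eout; under eq_bigr do rewrite -sumRMl.
  rewrite exchange_big /=; apply: eq_bigr => o _.
  by rewrite -sumRMl; apply: eq_bigr => z _; ring.
apply: Eout_le => // o; apply: Rle_trans (score_pos_mean_le p01 o lam0) _.
by apply: Req_le; field; lra.
Qed.

Lemma prob_out_coord x j : prob_out M x (fun o : row d => o j) = Eout M x (fun o => b2R (o j)).
Proof. by rewrite /prob_out big_mkcond; apply: eq_bigr => o _; rewrite /b2R; case: (o j); ring. Qed.

Lemma sum_fp_corr :
  \big[Rplus/0]_(j < d) fp_corr M p j =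
  \big[Rplus/0]_(i < n) Edata p (fun x => Eout M x (fun o => score p o (x i))).
Proof.
rewrite /fp_corr /Edata exchange_big [RHS]exchange_big /=; apply: eq_bigr => x _.
rewrite sumRMl [RHS]sumRMl; congr (_ * _).
transitivity (\big[Rplus/0]_(j < d) \big[Rplus/0]_(i < n) \big[Rplus/0]_(o : row d)
                (M x o * (b2R (o j) * (b2R (x i j) - p j)))).
  apply: eq_bigr => j _; rewrite prob_out_coord -sumRMl; apply: eq_bigr => i _.
  by rewrite -sumRMr; apply: eq_bigr => o _; rewrite Rmult_assoc.
rewrite exchange_big /=; apply: eq_bigr => i _.
rewrite exchange_big /=; apply: eq_bigr => o _.
by rewrite /score sumRMl.
Qed.

Lemma sum_cond_prob_coord :
  \big[Rplus/0]_(j < d) cond_prob_coord M p j = Edata p (fun x => Eout M x (@num_ones d)).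
Proof.
rewrite /cond_prob_coord /Edata exchange_big /=; apply: eq_bigr => x _.
rewrite sumRMl; congr (_ * _).
under eq_bigr do rewrite prob_out_coord.
by rewrite exchange_big /=; apply: eq_bigr => o _; rewrite sumRMl.
Qed.

Lemma sum_fp_corr_le lam : 0 < lam ->
  \big[Rplus/0]_(j < d) fp_corr M p j <=
  INR n * (exp eps * ((\big[Rplus/0]_(j < d) cond_prob_coord M p j) / (4 * lam) + lam) / 2
           + delta * INR d).
Proof.
move=> lam0; rewrite sum_fp_corr sum_cond_prob_coord -sumR_const.
by apply: sumR_le => i _; exact: score_correlation_le.
Qed.

End FingerprintUpperBound.

Section Continuity.
Variables (I : Type) (s : seq I) (P : pred I) (f : I -> R -> R) (t : R).
Hypothesis f_cont : forall i, continuous (f i) t.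

Lemma continuous_sumR : continuous (fun u => \big[Rplus/0]_(i <- s | P i) f i u) t.
Proof.
elim: s => [|a s' IH].
  by apply: (continuous_ext (fun _ => 0)); [move=> u; rewrite big_nil | exact: continuous_const].
case Pa: (P a); last by apply: continuous_ext IH => u; rewrite big_cons Pa.
apply: (continuous_ext (fun u => plus (f a u) (\big[Rplus/0]_(i <- s' | P i) f i u))).
  by move=> u; rewrite big_cons Pa.
exact: continuous_plus.
Qed.

Lemma continuous_prodR : continuous (fun u => \big[Rmult/1]_(i <- s | P i) f i u) t.
Proof.
elim: s => [|a s' IH].
  by apply: (continuous_ext (fun _ => 1)); [move=> u; rewrite big_nil | exact: continuous_const].
case Pa: (P a); last by apply: continuous_ext IH => u; rewrite big_cons Pa.
apply: (continuous_ext (fun u => f a u * \big[Rmult/1]_(i <- s' | P i) f i u)).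
  by move=> u; rewrite big_cons Pa.
exact: continuous_mult.
Qed.

End Continuity.

(* Coquelicot states these in a normed module, whose carrier [ring] does not
   recognise as [R]. *)
Lemma RInt_extR (f g : R -> R) a b : (forall t, f t = g t) -> RInt f a b = RInt g a b.
Proof. by move=> fg; apply: RInt_ext => t _; exact: fg. Qed.

Lemma RInt_scalR (f : R -> R) a b c : ex_RInt f a b ->
  RInt (fun t => c * f t) a b = c * RInt f a b.
Proof. exact: RInt_scal. Qed.

Lemma RInt_plusR (f g : R -> R) a b : ex_RInt f a b -> ex_RInt g a b ->
  RInt (fun t => f t + g t) a b = RInt f a b + RInt g a b.
Proof. exact: RInt_plus. Qed.

Lemma is_RInt_lincomb (I : Type) (s : seq I) (c : I -> R) (f : I -> R -> R) a b :
  (forall i, ex_RInt (f i) a b) ->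
  is_RInt (fun t => \big[Rplus/0]_(i <- s) (c i * f i t)) a b
          (\big[Rplus/0]_(i <- s) (c i * RInt (f i) a b)).
Proof.
move=> f_int; elim: s => [|i s IH].
  rewrite big_nil; apply: (is_RInt_ext (fun _ => 0)); first by move=> t _; rewrite big_nil.
  by have := is_RInt_const a b 0; rewrite scal_zero_r.
rewrite big_cons.
apply: (is_RInt_ext (fun t => plus (scal (c i) (f i t)) (\big[Rplus/0]_(j <- s) (c j * f j t)))).
  by move=> t _; rewrite big_cons.
by apply: is_RInt_plus => //; apply: is_RInt_scal; exact: RInt_correct.
Qed.

Lemma RInt_lincomb (Z : finType) (c : Z -> R) (f : Z -> R -> R) a b :
  (forall z, ex_RInt (f z) a b) ->
  RInt (fun t => \big[Rplus/0]_(z : Z) (c z * f z t)) a b =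
  \big[Rplus/0]_(z : Z) (c z * RInt (f z) a b).
Proof. by move=> f_int; apply: is_RInt_unique; exact: is_RInt_lincomb. Qed.

Lemma RInt_const01 (c : R) : RInt (fun _ => c) 0 1 = c.
Proof. by rewrite RInt_const /scal /= /mult /=; ring. Qed.

Definition set_coord d (p : 'I_d -> R) (l0 : 'I_d) (t : R) : 'I_d -> R :=
  fun l => if l == l0 then t else p l.

Section CubeAverage.
Variable ord : R -> R -> Prop.
Hypothesis ord_RInt : forall (f : R -> R) B,
  (forall t, continuous f t) -> (forall t, 0 < t < 1 -> ord (f t) B) -> ord (RInt f 0 1) B.

Lemma cube_average d (Z : finType) (phi : Z -> 'I_d -> R -> R) B :
  (forall z l t, continuous (phi z l) t) ->
  (forall p : 'I_d -> R, (forall l, 0 <= p l <= 1) ->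
     ord (\big[Rplus/0]_(z : Z) \big[Rmult/1]_(l < d) phi z l (p l)) B) ->
  ord (\big[Rplus/0]_(z : Z) \big[Rmult/1]_(l < d) RInt (phi z l) 0 1) B.
Proof.
move=> phi_cont pointwise.
pose partial m p := \big[Rplus/0]_(z : Z) \big[Rmult/1]_(l < d)
  (if (l < m)%N then RInt (phi z l) 0 1 else phi z l (p l)).
have step m (lt_md : (m < d)%N) p : partial m.+1 p =
    RInt (fun t => partial m (set_coord p (Ordinal lt_md) t)) 0 1 /\
    forall t, continuous (fun t => partial m (set_coord p (Ordinal lt_md) t)) t.
  set l0 := Ordinal lt_md.
  pose C z := \big[Rmult/1]_(l < d | l != l0)
    (if (l < m)%N then RInt (phi z l) 0 1 else phi z l (p l)).
  have slice t : partial m (set_coord p l0 t) = \big[Rplus/0]_(z : Z) (C z * phi z l0 t).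
    apply: eq_bigr => z _; rewrite (bigD1 l0) //= ltnn /set_coord eqxx Rmult_comm.
    by congr (_ * _); apply: eq_bigr => l /negbTE ->.
  split; last first.
    move=> t; apply: continuous_ext (fun t => esym (slice t)) _.
    by apply: continuous_sumR => z; apply: continuous_scal_r.
  under [RHS]RInt_ext do rewrite slice.
  rewrite RInt_lincomb => [|z]; last by apply: ex_RInt_continuous => u _.
  apply: eq_bigr => z _; rewrite (bigD1 l0) //= ltnSn Rmult_comm.
  congr (_ * _); apply: eq_bigr => l l_l0; rewrite ltnS leq_eqVlt.
  suff /negbTE -> : nat_of_ord l != m by [].
  by apply: contra l_l0 => /eqP lm; apply/eqP; apply: val_inj.
have partial_ord m : (m <= d)%N -> forall p : 'I_d -> R, (forall l, 0 <= p l <= 1) ->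
    ord (partial m p) B.
  elim: m => [_ p p01|m IH lt_md p p01].
    by move: (pointwise p p01); congr ord; apply: eq_bigr => z _; apply: eq_bigr.
  have [-> cont] := step m lt_md p; apply: ord_RInt => // t t01.
  apply: IH (ltnW lt_md) _ _ => l; rewrite /set_coord; case: (l == _); [lra | exact: p01].
move: (partial_ord d (leqnn d) (fun _ => 0) (fun _ => conj (Rle_refl 0) Rle_0_1)).
by congr ord; apply: eq_bigr => z _; apply: eq_bigr => l _; rewrite ltn_ord.
Qed.

End CubeAverage.

Lemma cube_average_le d (Z : finType) (phi : Z -> 'I_d -> R -> R) B :
  (forall z l t, continuous (phi z l) t) ->
  (forall p : 'I_d -> R, (forall l, 0 <= p l <= 1) ->
     \big[Rplus/0]_(z : Z) \big[Rmult/1]_(l < d) phi z l (p l) <= B) ->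
  \big[Rplus/0]_(z : Z) \big[Rmult/1]_(l < d) RInt (phi z l) 0 1 <= B.
Proof.
apply: cube_average => f B' f_cont fB; rewrite -[B']RInt_const01.
by apply: RInt_le => //; [lra | apply: ex_RInt_continuous => t _ | exact: ex_RInt_const].
Qed.

Lemma cube_average_ge d (Z : finType) (phi : Z -> 'I_d -> R -> R) B :
  (forall z l t, continuous (phi z l) t) ->
  (forall p : 'I_d -> R, (forall l, 0 <= p l <= 1) ->
     B <= \big[Rplus/0]_(z : Z) \big[Rmult/1]_(l < d) phi z l (p l)) ->
  B <= \big[Rplus/0]_(z : Z) \big[Rmult/1]_(l < d) RInt (phi z l) 0 1.
Proof.
have ord_RInt f B' : (forall t, continuous f t) -> (forall t, 0 < t < 1 -> B' <= f t) ->
    B' <= RInt f 0 1.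
  move=> f_cont fB; rewrite -[B']RInt_const01.
  by apply: RInt_le => //; [lra | exact: ex_RInt_const | apply: ex_RInt_continuous => t _].
exact: (@cube_average (fun a b => b <= a) ord_RInt d Z phi B).
Qed.

Lemma RInt_monomial_score k m :
  RInt (fun t => t ^ k * (1 - t) ^ m * (INR k - INR (k + m) * t)) 0 1 =
  RInt (fun t => t ^ k * (1 - t) ^ m * (2 * t - 1)) 0 1.
Proof.
(* Integration by parts: [F] vanishes at both endpoints. *)
pose F t := t ^ k.+1 * (1 - t) ^ m.+1.
have F' t : is_derive F t (t ^ k * (1 - t) ^ m * ((INR k - INR (k + m) * t) + (1 - 2 * t))).
  rewrite /F; auto_derive => //.
  change (match k with 0%N => 1 | _.+1 => INR k + 1 end) with (INR k.+1).
  change (match m with 0%N => 1 | _.+1 => INR m + 1 end) with (INR m.+1).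
  by rewrite plus_INR !S_INR; replace (1 + - t) with (1 - t) by ring; ring.
have sum_int : is_RInt (fun t => t ^ k * (1 - t) ^ m * ((INR k - INR (k + m) * t) + (1 - 2 * t)))
                 0 1 (minus (F 1) (F 0)).
  apply: is_RInt_derive => t _; first exact: F'.
  by apply: ex_derive_continuous; auto_derive.
have rhs_int : ex_RInt (fun t => t ^ k * (1 - t) ^ m * (2 * t - 1)) 0 1.
  by apply: ex_RInt_continuous => t _; apply: ex_derive_continuous; auto_derive.
have lhs_int : is_RInt (fun t => t ^ k * (1 - t) ^ m * (INR k - INR (k + m) * t)) 0 1
    (plus (minus (F 1) (F 0)) (RInt (fun t => t ^ k * (1 - t) ^ m * (2 * t - 1)) 0 1)).
  apply: is_RInt_ext (is_RInt_plus _ _ _ _ _ _ sum_int (RInt_correct _ _ _ rhs_int)).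
  by move=> t _; rewrite /plus /=; ring.
by rewrite (is_RInt_unique _ _ _ _ lhs_int) /F /minus /plus /opp /=; ring.
Qed.

Lemma RInt_affine_score c a b :
  RInt (fun t => c * (2 * t - 1)) a b = c * ((b * b - b) - (a * a - a)).
Proof.
have prim : is_RInt (fun t => c * (2 * t - 1)) a b
    (minus ((fun t => c * (t * t - t)) b) ((fun t => c * (t * t - t)) a)).
  apply: (is_RInt_derive (fun t => c * (t * t - t))) => t _; first by auto_derive => //; ring.
  by apply: ex_derive_continuous; auto_derive.
by rewrite (is_RInt_unique _ _ _ _ prim) /minus /plus /opp /=; ring.
Qed.

Section ContinuousIntegrals.
Variables (f g : R -> R).
Hypotheses (f_cont : forall t, continuous f t) (g_cont : forall t, continuous g t).

Lemma RInt_le_cont a b : a <= b -> (forall t, a < t < b -> f t <= g t) ->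
  RInt f a b <= RInt g a b.
Proof.
by move=> ab fg; apply: RInt_le => //; apply: ex_RInt_continuous => t _.
Qed.

Lemma RInt_split_cont a b c : RInt f a c = RInt f a b + RInt f b c.
Proof. by rewrite -(RInt_Chasles _ a b c) //; apply: ex_RInt_continuous => t _. Qed.

End ContinuousIntegrals.

Lemma threshold_RInt_bounds (u : R -> R) eps :
  (forall t, continuous u t) -> (forall t, 0 <= t <= 1 -> 0 <= u t <= 1) ->
  (forall t, 0 <= t <= 11/16 -> u t <= eps) -> (forall t, 7/8 <= t <= 1 -> 15/16 <= u t) ->
  105/1024 - eps/4 <= RInt (fun t => u t * (2 * t - 1)) 0 1 /\
  RInt u 0 1 <= 11/16 * eps + 5/16.
Proof.
move=> u_cont u01 u_low u_high.
have lin_cont c t : continuous (fun t => c * (2 * t - 1)) t.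
  by apply: ex_derive_continuous; auto_derive.
have score_cont t : continuous (fun t => u t * (2 * t - 1)) t.
  by apply: continuous_mult => //; apply: ex_derive_continuous; auto_derive.
have const_cont c t : continuous (fun _ : R => c) t by exact: continuous_const.
split.
  rewrite (RInt_split_cont _ 0 (1/2) 1) // (RInt_split_cont _ (1/2) (7/8) 1) //.
  have low : RInt (fun t => eps * (2 * t - 1)) 0 (1/2) <=
             RInt (fun t => u t * (2 * t - 1)) 0 (1/2).
    apply: RInt_le_cont => //; first lra.
    by move=> t t01; have := u_low t ltac:(lra); have := u01 t ltac:(lra); nra.
  have mid : RInt (fun _ => 0) (1/2) (7/8) <= RInt (fun t => u t * (2 * t - 1)) (1/2) (7/8).
    apply: RInt_le_cont => //; first lra.
    by move=> t t01; have := u01 t ltac:(lra); nra.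
  have high : RInt (fun t => 15/16 * (2 * t - 1)) (7/8) 1 <=
              RInt (fun t => u t * (2 * t - 1)) (7/8) 1.
    apply: RInt_le_cont => //; first lra.
    by move=> t t01; have := u_high t ltac:(lra); nra.
  rewrite !RInt_affine_score RInt_const /scal /= /mult /= in low mid high.
  lra.
rewrite (RInt_split_cont _ 0 (11/16) 1) //.
have low : RInt u 0 (11/16) <= RInt (fun _ => eps) 0 (11/16).
  by apply: RInt_le_cont => //; [lra | move=> t t01; apply: u_low; lra].
have high : RInt u (11/16) 1 <= RInt (fun _ => 1) (11/16) 1.
  by apply: RInt_le_cont => //; [lra | move=> t t01; have := u01 t ltac:(lra); lra].
rewrite !RInt_const /scal /= /mult /= in low high.
lra.
Qed.

Definition col_weight n d (x : dataset n d) (l : 'I_d) (t : R) : R :=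
  \big[Rmult/1]_(i < n) (if x i l then t else 1 - t).

Definition col_count n d (x : dataset n d) (l : 'I_d) : nat :=
  count id [seq x i l | i <- index_enum 'I_n].

Lemma prodR_bool_seq (s : seq bool) t :
  \big[Rmult/1]_(b <- s) (if b then t else 1 - t) =
  t ^ count id s * (1 - t) ^ (size s - count id s).
Proof.
elim: s => [|[] s IH]; rewrite ?big_nil ?big_cons ?IH /= ?add0n; first ring.
  by rewrite add1n subSS; ring.
by rewrite subSn ?count_size //=; ring.
Qed.

Lemma sumR_b2R_seq (s : seq bool) : \big[Rplus/0]_(b <- s) b2R b = INR (count id s).
Proof.
elim: s => [|[] s IH]; rewrite ?big_nil // big_cons IH /b2R.
  by rewrite (_ : count id (true :: s) = (count id s).+1) // S_INR; ring.
by rewrite (_ : count id (false :: s) = count id s) //; ring.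
Qed.

Section Columns.
Variables (n d : nat) (x : dataset n d).

Lemma col_weight_cont l t : continuous (col_weight x l) t.
Proof.
apply: continuous_prodR => i; case: (x i l); first exact: continuous_id.
apply: (continuous_ext (fun u => minus 1 u)) => //.
by apply: continuous_minus; [exact: continuous_const | exact: continuous_id].
Qed.

Lemma bern_weight_cols (p : 'I_d -> R) :
  bern_weight p x = \big[Rmult/1]_(l < d) col_weight x l (p l).
Proof. by rewrite /bern_weight /col_weight exchange_big. Qed.

Lemma size_col l : size [seq x i l | i <- index_enum 'I_n] = n.
Proof. by rewrite size_map [index_enum _]unlock -enumT size_enum_ord. Qed.

Lemma col_count_le l : (col_count x l <= n)%N.
Proof. by rewrite -{2}(size_col l) count_size. Qed.

Lemma col_weight_monomial l t :
  col_weight x l t = t ^ col_count x l * (1 - t) ^ (n - col_count x l).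
Proof.
rewrite /col_weight /col_count -(big_map (fun i => x i l) xpredT (fun b => if b then t else 1 - t)).
by rewrite prodR_bool_seq size_col.
Qed.

Lemma sum_col_centered (p : 'I_d -> R) l :
  \big[Rplus/0]_(i < n) (b2R (x i l) - p l) = INR (col_count x l) - INR n * p l.
Proof. by rewrite sumRB sumR_const -(big_map (fun i => x i l) xpredT b2R) sumR_b2R_seq. Qed.

Lemma RInt_col_weight_score l :
  RInt (fun t => col_weight x l t * (INR (col_count x l) - INR n * t)) 0 1 =
  RInt (fun t => col_weight x l t * (2 * t - 1)) 0 1.
Proof.
have := RInt_monomial_score (col_count x l) (n - col_count x l).
rewrite subnKC ?col_count_le // => ibp.
under RInt_ext do rewrite col_weight_monomial.
by rewrite ibp; apply: RInt_ext => t _; rewrite col_weight_monomial.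
Qed.

End Columns.

Definition coord_prob n d (M : mech n d) (x : dataset n d) (j : 'I_d) : R :=
  prob_out M x (fun o : row d => o j).

(* Split into one-variable factors, one per coordinate [l] of [p], so that averaging
   over the cube reduces to one-dimensional integrals (see [sum_fp_integrand]). *)
Definition fp_integrand n d (M : mech n d) (c : R) (z : 'I_d * dataset n d) (l : 'I_d) :
    R -> R :=
  let: (j, x) := z in
  if l == j then
    fun t => col_weight x j t * (coord_prob M x j * (INR (col_count x j) - INR n * t)
                                 - c * coord_prob M x j)
  else col_weight x l.

Section FingerprintIntegrand.
Variables (n d : nat) (M : mech n d) (c : R).

Lemma fp_integrand_cont z l t : continuous (fp_integrand M c z l) t.
Proof.
case: z => j x /=; case: (l == j); last exact: col_weight_cont.
apply: continuous_mult; first exact: col_weight_cont.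
by apply: ex_derive_continuous; auto_derive.
Qed.

Lemma bern_weight_split (p : 'I_d -> R) (x : dataset n d) j :
  bern_weight p x = col_weight x j (p j) * \big[Rmult/1]_(l < d | l != j) col_weight x l (p l).
Proof. by rewrite bern_weight_cols (bigD1 j). Qed.

Lemma sum_fp_integrand (p : 'I_d -> R) :
  \big[Rplus/0]_(z : 'I_d * dataset n d) \big[Rmult/1]_(l < d) fp_integrand M c z l (p l) =
  \big[Rplus/0]_(j < d) (fp_corr M p j - c * cond_prob_coord M p j).
Proof.
transitivity (\big[Rplus/0]_(j < d) \big[Rplus/0]_(x : dataset n d)
                \big[Rmult/1]_(l < d) fp_integrand M c (j, x) l (p l)).
  by rewrite pair_bigA; apply: eq_bigr => -[j x] _.
apply: eq_bigr => j _.
rewrite /fp_corr /Edata /cond_prob_coord -sumRMl -sumRB; apply: eq_bigr => x _.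
rewrite (bigD1 j) //= eqxx (eq_bigr (fun l => col_weight x l (p l))) => [|l /negbTE -> //].
rewrite sum_col_centered (bern_weight_split p x j) -/(coord_prob M x j).
by set rest := \big[Rmult/1]_(l < d | l != j) _; ring.
Qed.

Lemma cond_prob_coord_set_coord (p : 'I_d -> R) j t :
  cond_prob_coord M (set_coord p j t) j =
  \big[Rplus/0]_(x : dataset n d)
    (\big[Rmult/1]_(l < d | l != j) col_weight x l (p l) * coord_prob M x j * col_weight x j t).
Proof.
apply: eq_bigr => x _; rewrite (bern_weight_split _ x j) /set_coord eqxx -/(coord_prob M x j).
rewrite (eq_bigr (fun l => col_weight x l (p l))) => [|l /negbTE -> //].
by set rest := \big[Rmult/1]_(l < d | l != j) _; ring.
Qed.

Lemma RInt_fp_integrand_coord j x :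
  RInt (fp_integrand M c (j, x) j) 0 1 = coord_prob M x j *
    (RInt (fun t => col_weight x j t * (2 * t - 1)) 0 1 - c * RInt (col_weight x j) 0 1).
Proof.
have w_int (g : R -> R) : (forall t, continuous g t) ->
    ex_RInt (fun t => col_weight x j t * g t) 0 1.
  move=> g_cont; apply: ex_RInt_continuous => t _.
  by apply: continuous_mult; [exact: col_weight_cont | exact: g_cont].
have score_int : ex_RInt (fun t => col_weight x j t * (INR (col_count x j) - INR n * t)) 0 1.
  by apply: w_int => t; apply: ex_derive_continuous; auto_derive.
have w_int0 : ex_RInt (col_weight x j) 0 1.
  by apply: ex_RInt_continuous => t _; exact: col_weight_cont.
rewrite /= eqxx (@RInt_extR _ (fun t => coord_prob M x j *
    (col_weight x j t * (INR (col_count x j) - INR n * t)) +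
    - (c * coord_prob M x j) * col_weight x j t) 0 1); last by move=> t; ring.
rewrite RInt_plusR ?RInt_scalR ?RInt_col_weight_score //; first ring.
  exact: (ex_RInt_scal _ _ _ _ score_int).
exact: (ex_RInt_scal _ _ _ _ w_int0).
Qed.

Definition cond_prob_slice (p : 'I_d -> R) j (t : R) : R :=
  cond_prob_coord M (set_coord p j t) j.

Lemma RInt_fp_integrand_slice (p : 'I_d -> R) j :
  \big[Rplus/0]_(x : dataset n d) (\big[Rmult/1]_(l < d | l != j) col_weight x l (p l) *
                                   RInt (fp_integrand M c (j, x) j) 0 1) =
  RInt (fun t => cond_prob_slice p j t * (2 * t - 1)) 0 1 - c * RInt (cond_prob_slice p j) 0 1.
Proof.
pose A x := \big[Rmult/1]_(l < d | l != j) col_weight x l (p l) * coord_prob M x j.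
rewrite (@RInt_extR (fun t => cond_prob_slice p j t * (2 * t - 1))
  (fun t => \big[Rplus/0]_(x : dataset n d) (A x * (col_weight x j t * (2 * t - 1)))) 0 1);
  last first.
  by move=> t; rewrite /cond_prob_slice cond_prob_coord_set_coord -sumRMr;
     apply: eq_bigr => x _; rewrite /A; ring.
rewrite (@RInt_extR (cond_prob_slice p j)
  (fun t => \big[Rplus/0]_(x : dataset n d) (A x * col_weight x j t)) 0 1);
  last by move=> t; rewrite /cond_prob_slice cond_prob_coord_set_coord.
rewrite !RInt_lincomb => [|x|x]; last 2 first.
- by apply: ex_RInt_continuous => t _; exact: col_weight_cont.
- apply: ex_RInt_continuous => t _; apply: continuous_mult; first exact: col_weight_cont.
  by apply: ex_derive_continuous; auto_derive.
rewrite -sumRMl -sumRB; apply: eq_bigr => x _; rewrite RInt_fp_integrand_coord /A.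
set rest := \big[Rmult/1]_(l < d | l != j) _.
by change (RInt (fun t => col_weight x j t) 0 1) with (RInt (col_weight x j) 0 1); ring.
Qed.

End FingerprintIntegrand.

Lemma RInt_fp_integrand_le n d (M : mech n d) eps delta lam :
  is_mech M -> diff_private eps delta M -> 0 < lam ->
  \big[Rplus/0]_(z : 'I_d * dataset n d)
     \big[Rmult/1]_(l < d) RInt (fp_integrand M (INR n * exp eps / (8 * lam)) z l) 0 1 <=
  INR n * exp eps * lam / 2 + INR n * delta * INR d.
Proof.
move=> M_mech M_dp lam0; apply: cube_average_le => [z l t|p p01]; first exact: fp_integrand_cont.
rewrite sum_fp_integrand.
set c := INR n * exp eps / (8 * lam).
set G := \big[Rplus/0]_(j < d) cond_prob_coord M p j.
have -> : \big[Rplus/0]_(j < d) (fp_corr M p j - c * cond_prob_coord M p j) =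
    \big[Rplus/0]_(j < d) fp_corr M p j - c * G by rewrite sumRB sumRMl.
have := sum_fp_corr_le M_mech p01 M_dp lam0.
have -> : INR n * (exp eps * (G / (4 * lam) + lam) / 2 + delta * INR d) =
    c * G + (INR n * exp eps * lam / 2 + INR n * delta * INR d).
  by rewrite /c; field; lra.
lra.
Qed.

Section CoordinateLowerBound.
Variables (n d : nat) (M : mech n d) (c eps : R) (j : 'I_d).
Hypotheses (M_mech : is_mech M) (c0 : 0 <= c).
Hypothesis accurate : forall p : 'I_d -> R, (forall l, 0 <= p l <= 1) ->
  (p j <= 11/16 -> cond_prob_coord M p j <= eps) /\
  (7/8 <= p j -> 15/16 <= cond_prob_coord M p j).

Lemma RInt_fp_integrand_coord_ge :
  105/1024 - eps/4 - c * (11/16 * eps + 5/16) <=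
  \big[Rplus/0]_(x : dataset n d) \big[Rmult/1]_(l < d) RInt (fp_integrand M c (j, x) l) 0 1.
Proof.
pose psi x l := if l == j then fun _ : R => RInt (fp_integrand M c (j, x) j) 0 1
                else col_weight x l.
have -> : \big[Rplus/0]_(x : dataset n d) \big[Rmult/1]_(l < d) RInt (fp_integrand M c (j, x) l) 0 1
        = \big[Rplus/0]_(x : dataset n d) \big[Rmult/1]_(l < d) RInt (psi x l) 0 1.
  apply: eq_bigr => x _; apply: eq_bigr => l _; rewrite /psi.
  by case: (eqVneq l j) => [->|/negbTE lj]; rewrite ?RInt_const01 //= lj.
apply: cube_average_ge => [x l t|p p01].
  by rewrite /psi; case: (l == j); [exact: continuous_const | exact: col_weight_cont].
have -> : \big[Rplus/0]_(x : dataset n d) \big[Rmult/1]_(l < d) psi x l (p l) =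
    \big[Rplus/0]_(x : dataset n d) (\big[Rmult/1]_(l < d | l != j) col_weight x l (p l) *
                                     RInt (fp_integrand M c (j, x) j) 0 1).
  apply: eq_bigr => x _; rewrite (bigD1 j) // /psi eqxx Rmult_comm.
  by congr (_ * _); first apply: eq_bigr => l /negbTE ->.
rewrite RInt_fp_integrand_slice.
have cube_slice t : 0 <= t <= 1 -> forall l, 0 <= set_coord p j t l <= 1.
  by move=> t01 l; rewrite /set_coord; case: (l == j).
have slice_cont t : continuous (cond_prob_slice M p j) t.
  apply: (continuous_ext (fun t => \big[Rplus/0]_(x : dataset n d)
    (\big[Rmult/1]_(l < d | l != j) col_weight x l (p l) * coord_prob M x j * col_weight x j t))).
    by move=> u; rewrite /cond_prob_slice cond_prob_coord_set_coord.
  by apply: continuous_sumR => x; apply: continuous_scal_r; exact: col_weight_cont.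
have slice01 t : 0 <= t <= 1 -> 0 <= cond_prob_slice M p j t <= 1.
  move=> t01; rewrite /cond_prob_slice.
  by split; [apply: cond_prob_coord_ge0 | apply: cond_prob_coord_le1] => //; exact: cube_slice.
have slice_low t : 0 <= t <= 11/16 -> cond_prob_slice M p j t <= eps.
  move=> t01; apply: (proj1 (accurate (cube_slice t _))); first lra.
  by rewrite /set_coord eqxx; lra.
have slice_high t : 7/8 <= t <= 1 -> 15/16 <= cond_prob_slice M p j t.
  move=> t01; apply: (proj2 (accurate (cube_slice t _))); first lra.
  by rewrite /set_coord eqxx; lra.
have [score_low mass_up] := threshold_RInt_bounds slice_cont slice01 slice_low slice_high.
by have := Rmult_le_compat_l _ _ _ c0 mass_up; lra.
Qed.

End CoordinateLowerBound.

Lemma RInt_fp_integrand_ge n d (M : mech n d) c eps :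
  is_mech M -> 0 <= c ->
  (forall p : 'I_d -> R, (forall l, 0 <= p l <= 1) -> forall j,
     (p j <= 11/16 -> cond_prob_coord M p j <= eps) /\
     (7/8 <= p j -> 15/16 <= cond_prob_coord M p j)) ->
  INR d * (105/1024 - eps/4 - c * (11/16 * eps + 5/16)) <=
  \big[Rplus/0]_(z : 'I_d * dataset n d) \big[Rmult/1]_(l < d) RInt (fp_integrand M c z l) 0 1.
Proof.
move=> M_mech c0 accurate; rewrite -sumR_const.
have -> : \big[Rplus/0]_(z : 'I_d * dataset n d)
      \big[Rmult/1]_(l < d) RInt (fp_integrand M c z l) 0 1 =
    \big[Rplus/0]_(j < d) \big[Rplus/0]_(x : dataset n d)
      \big[Rmult/1]_(l < d) RInt (fp_integrand M c (j, x) l) 0 1.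
  by rewrite pair_bigA; apply: eq_bigr => -[j x] _.
apply: sumR_le => j _; apply: RInt_fp_integrand_coord_ge => // p p01.
exact: accurate.
Qed.

Lemma ln_le_2sqrt r : 0 < r -> ln r <= 2 * sqrt r.
Proof.
move=> r0; have sqrt0 : 0 < sqrt r by apply: sqrt_lt_R0.
rewrite -{1}(sqrt_sqrt r) ?ln_mult //; last lra.
by have := exp_ineq1_le (ln (sqrt r)); rewrite exp_ln //; lra.
Qed.

Lemma sqrt_ln_ratio_le k d : 0 < k -> 0 < d ->
  1/16 * sqrt k * ln (d / (16 * k)) <= sqrt d / 32.
Proof.
move=> k0 d0; set r := d / (16 * k).
have r0 : 0 < r by apply: Rdiv_lt_0_compat; lra.
have sqrt_d : sqrt d = 4 * (sqrt k * sqrt r).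
  rewrite -sqrt_mult; try lra.
  rewrite (_ : d = 4 * 4 * (k * r)); last by rewrite /r; field; lra.
  by rewrite sqrt_mult ?sqrt_square; try nra.
have : 0 <= sqrt k by apply: sqrt_pos.
have := ln_le_2sqrt r0; rewrite sqrt_d; nra.
Qed.

Lemma sqrt_dim_le n d eps e : 32 <= d -> 0 <= eps <= 1/256 -> 0 <= n -> 0 < e <= 3 ->
  d * (105/1024 - eps/4 - n * e / (8 * sqrt d) * (11/16 * eps + 5/16)) <=
  n * e * sqrt d / 2 + 1/8 ->
  sqrt d / 32 <= n.
Proof.
move=> d32 eps01 n0 e03 H.
have sqrt0 : 0 < sqrt d by apply: sqrt_lt_R0; lra.
have sqrt_sq : sqrt d * sqrt d = d by apply: sqrt_sqrt; lra.
have scale : d * (n * e / (8 * sqrt d)) = n * e * sqrt d / 8.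
  by rewrite -{1}sqrt_sq; field; lra.
have expand : d * (105/1024 - eps/4 - n * e / (8 * sqrt d) * (11/16 * eps + 5/16)) =
    105/1024 * d - d * eps / 4 - d * (n * e / (8 * sqrt d)) * (11/16 * eps + 5/16).
  by rewrite /Rdiv; ring.
rewrite expand scale in H.
have ne0 : 0 <= n * e * sqrt d by apply: Rmult_le_pos; nra.
have : n * e * sqrt d <= 3 * (n * sqrt d) by nra.
have : d * eps <= d / 256 by nra.
have : n * e * sqrt d / 8 * (11/16 * eps + 5/16) <= n * e * sqrt d / 24 by nra.
move=> *; apply: (Rmult_le_reg_r (sqrt d)) => //; nra.
Qed.

Unset Implicit Arguments.

Theorem corollary4p3 (n d k : nat) :
  (32 <= 16 * k)%N -> (16 * k <= d)%N ->
  forall M : mech n d,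
    is_mech M ->
    diff_private 1 (/ (8 * INR n * INR d)) M ->
    (forall p : 'I_d -> R,
       (forall j, 0 <= p j <= 1) ->
       forall j : 'I_d,
         (p j <= 7 / 8 - 3 / 16 -> cond_prob_coord M p j <= INR k / (16 * INR d)) /\
         (7 / 8 <= p j -> 1 - 1 / 16 <= cond_prob_coord M p j)) ->
    1 / 16 * sqrt (INR k) * ln (INR d / (16 * INR k)) <= INR n.
Proof.
move=> k2 dk M M_mech M_dp accurate.
have kR : 2 <= INR k by apply: (le_INR 2); apply/leP; rewrite -(leq_pmul2l (isT : (0 < 16)%N)).
have dR : 16 * INR k <= INR d by have := le_INR _ _ (elimT leP dk); rewrite mult_INR /=; lra.
have lam0 : 0 < sqrt (INR d) by apply: sqrt_lt_R0; lra.
have e03 : 0 < exp 1 <= 3 by split; [exact: exp_pos | exact: exp_le_3].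
have n0 := pos_INR n.
set eps := INR k / (16 * INR d).
have accurate' p : (forall l, 0 <= p l <= 1) -> forall j,
    (p j <= 11/16 -> cond_prob_coord M p j <= eps) /\
    (7/8 <= p j -> 15/16 <= cond_prob_coord M p j).
  move=> p01 j; have [low high] := accurate p p01 j.
  by split=> pj; [apply: low | have := high pj]; lra.
have upper := RInt_fp_integrand_le M_mech M_dp lam0.
have c0 : 0 <= INR n * exp 1 / (8 * sqrt (INR d)).
  by apply: Rmult_le_pos; [nra | apply/Rlt_le/Rinv_0_lt_compat; lra].
have lower := RInt_fp_integrand_ge M_mech c0 accurate'.
have privacy_cost : INR n * / (8 * INR n * INR d) * INR d <= 1/8.
  have [->|n_pos] := Req_dec (INR n) 0; first lra.
  by apply: Req_le; field; lra.
apply: (Rle_trans _ (sqrt (INR d) / 32)); first by apply: sqrt_ln_ratio_le; lra.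
apply: (sqrt_dim_le (eps := eps) (e := exp 1)) => //; first lra.
  split; first by apply: Rmult_le_pos; [lra | apply: Rlt_le; apply: Rinv_0_lt_compat; lra].
  rewrite /eps; apply: (Rmult_le_reg_r (16 * INR d)); first lra.
  by field_simplify; lra.
by move: lower upper; lra.
Qed.
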